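(* Let $\mathcal X$ be a real normed space equipped with isosceles orthogonality $\perp$, and let $\mathcal Y$ be a Banach space. Let $f,g,h,k:\mathcal X\to\mathcal Y$ satisfy $f(0)=g(0)=h(0)=k(0)=0$ and, for some $\varepsilon>0$, \[\|f(x+y)+g(x-y)-h(x)-k(y)\|\le\varepsilon\quad\text{for all }x,y\in\mathcal X\text{ with }x\perp y.\] Then $f$ is a linear combination (with real coefficients) of an approximately orthogonally Cauchy mapping, an approximately orthogonally quadratic mapping and an approximately orthogonally constant mapping, all from $\mathcal X$ to $\mathcal Y$. The same is true for $g$.
   Context: For $x,y$ in a real normed space $\mathcal X$, isosceles orthogonality is defined by $x\perp y$ if and only if $\|x+y\|=\|x-y\|$. A mapping $\varphi:\mathcal X\to\mathcal Y$ is: approximately orthogonally Cauchy if there is $\delta>0$ with $\|\varphi(x+y)-\varphi(x)-\varphi(y)\|\le\delta$ for all $x\perp y$; approximately orthogonally quadratic if there is $\delta>0$ with $\|\varphi(x+y)+\varphi(x-y)-2\varphi(x)-2\varphi(y)\|\le\delta$ for all $x\perp y$; approximately orthogonally constant if there is $\delta>0$ with $\|\varphi(x+y)-\varphi(x-y)\|\le\delta$ for all $x\perp y$. *)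

From HB Require Import structures.
From mathcomp Require Import all_boot all_order all_algebra.
From mathcomp Require Import all_classical all_reals all_analysis.
Set Implicit Arguments. Unset Strict Implicit. Unset Printing Implicit Defensive.
Import Order.TTheory GRing.Theory Num.Theory.
Import numFieldNormedType.Exports.
Local Open Scope ring_scope.

Definition iso_orth {R : realType} {X : normedModType R} (x y : X) : Prop :=
  `|x + y| = `|x - y|.

Definition approx_orth_cauchy {R : realType} {X Y : normedModType R}
  (phi : X -> Y) : Prop :=
  exists delta : R, 0 < delta /\
    forall x y : X, iso_orth x y -> `|phi (x + y) - phi x - phi y| <= delta.

Definition approx_orth_quadratic {R : realType} {X Y : normedModType R}
  (phi : X -> Y) : Prop :=
  exists delta : R, 0 < delta /\
    forall x y : X, iso_orth x y ->
      `|phi (x + y) + phi (x - y) - 2 *: phi x - 2 *: phi y| <= delta.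

Definition approx_orth_constant {R : realType} {X Y : normedModType R}
  (phi : X -> Y) : Prop :=
  exists delta : R, 0 < delta /\
    forall x y : X, iso_orth x y -> `|phi (x + y) - phi (x - y)| <= delta.

Definition lin_comb_CQK {R : realType} {X Y : normedModType R}
  (phi : X -> Y) : Prop :=
  exists (a b c : R) (p q r : X -> Y),
    [/\ approx_orth_cauchy p, approx_orth_quadratic q, approx_orth_constant r
      & forall x, phi x = a *: p x + b *: q x + c *: r x].

(** The hypothesis at [(x, 0)] and at [(0, y)] bounds
    [P(x,y) = (f(x+y) - f x - f y) + (g(x-y) - g x - g(-y))] on orthogonal pairs.
    Isosceles orthogonality is symmetric and stable under sign changes, so
    [P(x,y) - P(-y,-x)], the Cauchy defect of [z |-> f z - f (-z)], is bounded, and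
    so is [P(x,y) + P(-x,-y)], which is [P] for the even maps [z |-> f z + f (-z)]
    and [z |-> g z + g (-z)].  For even [f], [g], [P(x,y) + P(x,-y)] and
    [P(x,y) - P(x,-y)] are the quadratic defect of [f + g] and the constant defect
    of [f - g].  Writing [f = f_o + ((f_e + g_e) + (f_e - g_e))/2] with odd and even
    parts concludes; since [P] for [(g, f)] is [P] for [(f, g)] at [(x, -y)], the
    same holds for [g]. *)
From HB Require Import structures.
From mathcomp Require Import all_boot all_order all_algebra ring.
From mathcomp Require Import all_classical all_reals all_analysis.
Import Order.TTheory GRing.Theory Num.Theory.
Import numFieldNormedType.Exports.
Set Implicit Arguments. Unset Strict Implicit. Unset Printing Implicit Defensive.
Local Open Scope ring_scope.

Section Defects.
Variables (V W : zmodType).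
Implicit Types (phi psi f g h k : V -> W) (x y z : V).

Definition cauchy_defect phi x y := phi (x + y) - phi x - phi y.

(* Twice the usual odd and even parts, so that no halving is needed. *)
Definition odd_part phi z := phi z - phi (- z).
Definition even_part phi z := phi z + phi (- z).

Definition pair_defect f g x y := cauchy_defect f x y + cauchy_defect g x (- y).

Lemma cauchy_defectC phi x y : cauchy_defect phi x y = cauchy_defect phi y x.
Proof. by rewrite /cauchy_defect [y + x]addrC [RHS]addrAC. Qed.

Lemma cauchy_defectD phi psi x y :
  cauchy_defect (phi \+ psi) x y = cauchy_defect phi x y + cauchy_defect psi x y.
Proof. by rewrite /cauchy_defect /= !opprD !addrA [LHS](ACl (1*3*5*2*4*6)). Qed.

Lemma cauchy_defectB phi psi x y :
  cauchy_defect (phi \- psi) x y = cauchy_defect phi x y - cauchy_defect psi x y.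
Proof.
by rewrite /cauchy_defect /= !opprD !opprK !addrA [LHS](ACl (1*3*5*2*4*6)).
Qed.

Lemma cauchy_defect_compN phi x y :
  cauchy_defect (fun z => phi (- z)) x y = cauchy_defect phi (- x) (- y).
Proof. by rewrite /cauchy_defect opprD. Qed.

Lemma cauchy_defect_odd_part phi x y :
  cauchy_defect (odd_part phi) x y = cauchy_defect phi x y - cauchy_defect phi (- x) (- y).
Proof. by rewrite -cauchy_defect_compN; apply: cauchy_defectB. Qed.

Lemma even_partN phi z : even_part phi (- z) = even_part phi z.
Proof. by rewrite /even_part opprK addrC. Qed.

Lemma pair_defectC f g x y : pair_defect g f x y = pair_defect f g x (- y).
Proof. by rewrite /pair_defect opprK addrC. Qed.

Lemma pair_defect_even_part f g x y :
  pair_defect (even_part f) (even_part g) x y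
  = pair_defect f g x y + pair_defect f g (- x) (- y).
Proof.
rewrite /pair_defect /even_part -/(f \+ (fun z => f (- z))).
rewrite -/(g \+ (fun z => g (- z))) !cauchy_defectD /cauchy_defect /= !opprD !opprK.
by rewrite addrACA.
Qed.

Lemma cauchy_defect_odd_part_pair f g x y :
  cauchy_defect (odd_part f) x y = pair_defect f g x y - pair_defect f g (- y) (- x).
Proof.
rewrite cauchy_defect_odd_part /pair_defect opprK.
rewrite (cauchy_defectC f (- y)) (cauchy_defectC g (- y)).
by rewrite [cauchy_defect f (- x) _ + _]addrC addrKA.
Qed.

Lemma quadratic_defect_even psi x y : (forall z, psi (- z) = psi z) ->
  psi (x + y) + psi (x - y) - psi x *+ 2 - psi y *+ 2
  = cauchy_defect psi x y + cauchy_defect psi x (- y).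
Proof.
move=> psiN; rewrite /cauchy_defect psiN !mulr2n !opprD !addrA.
by rewrite [LHS](ACl (1*3*5*2*4*6)).
Qed.

Lemma constant_defect_even psi x y : (forall z, psi (- z) = psi z) ->
  psi (x + y) - psi (x - y) = cauchy_defect psi x y - cauchy_defect psi x (- y).
Proof.
by move=> psiN; rewrite /cauchy_defect psiN opprB subrKA opprB subrKA.
Qed.

Lemma cauchy_defectD_pair f g x y :
  cauchy_defect (f \+ g) x y + cauchy_defect (f \+ g) x (- y)
  = pair_defect f g x y + pair_defect f g x (- y).
Proof.
rewrite /pair_defect !cauchy_defectD opprK.
by rewrite addrACA [RHS]addrACA [cauchy_defect g x (- y) + _]addrC.
Qed.

Lemma cauchy_defectB_pair f g x y :
  cauchy_defect (f \- g) x y - cauchy_defect (f \- g) x (- y)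
  = pair_defect f g x y - pair_defect f g x (- y).
Proof.
rewrite /pair_defect !cauchy_defectB opprK (opprB (cauchy_defect f x (- y))) addrACA.
by rewrite (opprD (cauchy_defect f x (- y))) (addrC (- cauchy_defect f x (- y))).
Qed.

Lemma pair_defect_split f g h k x y :
  pair_defect f g x y = (f (x + y) + g (x - y) - h x - k y)
                        - (f x + g x - h x) - (f y + g (- y) - k y).
Proof.
rewrite /pair_defect /cauchy_defect !opprD !opprK !addrA.
rewrite [RHS]((@GRing.add W).[ACl ((1*5*8*2*6*9)*(3*7)*(4*10))]).
by rewrite !addNr !addr0.
Qed.

End Defects.

Lemma quarter_split (K : numFieldType) (V : lmodType K) (a b c : V) :
  a = 2^-1 *: (a - b) + 4^-1 *: (a + b + c) + 4^-1 *: (a + b - c).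
Proof.
rewrite -addrA -scalerDr addrACA subrr addr0 -mulr2n -[(a + b) *+ 2]scaler_nat.
have -> : 4^-1 *: (2 *: (a + b)) = 2^-1 *: (a + b) by rewrite scalerA; congr (_ *: _); field.
rewrite -scalerDr addrACA addNr addr0 -mulr2n -[a *+ 2]scaler_nat.
by rewrite scalerA mulVf ?scale1r.
Qed.

Section ApproximateParts.
Variables (R : realType) (X Y : normedModType R).
Implicit Types (f g : X -> Y) (x y : X) (d : R).

Lemma iso_orth0r x : iso_orth x 0.
Proof. by rewrite /iso_orth addr0 subr0. Qed.

Lemma iso_orth0l y : iso_orth 0 y.
Proof. by rewrite /iso_orth add0r sub0r normrN. Qed.

Lemma iso_orthC x y : iso_orth x y -> iso_orth y x.
Proof. by rewrite /iso_orth addrC => ->; rewrite distrC. Qed.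

Lemma iso_orthNr x y : iso_orth x y -> iso_orth x (- y).
Proof. by rewrite /iso_orth opprK => ->. Qed.

Lemma iso_orthN x y : iso_orth x y -> iso_orth (- x) (- y).
Proof. by rewrite /iso_orth => xy; rewrite -opprD normrN xy -opprD normrN. Qed.

Definition pair_defect_bounded f g d :=
  forall x y, iso_orth x y -> `|pair_defect f g x y| <= d.

Lemma pair_defect_boundedC f g d :
  pair_defect_bounded f g d -> pair_defect_bounded g f d.
Proof. by move=> fgd x y xy; rewrite pair_defectC; apply/fgd/iso_orthNr. Qed.

Lemma pair_defect_bounded_even_part f g d : pair_defect_bounded f g d ->
  pair_defect_bounded (even_part f) (even_part g) (d + d).
Proof.
move=> fgd x y xy; rewrite pair_defect_even_part.
apply: (le_trans (ler_normD _ _)).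
by apply: lerD; apply: fgd => //; apply: iso_orthN.
Qed.

Lemma approx_orth_cauchy_odd_part f g d : 0 < d ->
  pair_defect_bounded f g d -> approx_orth_cauchy (odd_part f).
Proof.
move=> d_gt0 fgd; exists (d + d); split=> [|x y xy]; first exact: addr_gt0.
rewrite -/(cauchy_defect _ x y) (cauchy_defect_odd_part_pair f g).
apply: (le_trans (ler_normB _ _)).
by apply: lerD; apply: fgd => //; apply/iso_orthN/iso_orthC.
Qed.

Section EvenMaps.
Variables f g : X -> Y.
Hypotheses (fN : forall z, f (- z) = f z) (gN : forall z, g (- z) = g z).

Lemma approx_orth_quadratic_even d : 0 < d ->
  pair_defect_bounded f g d -> approx_orth_quadratic (f \+ g).
Proof.
move=> d_gt0 fgd; exists (d + d); split=> [|x y xy]; first exact: addr_gt0.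
rewrite !scaler_nat quadratic_defect_even => [|z]; last by rewrite /= fN gN.
rewrite cauchy_defectD_pair.
apply: (le_trans (ler_normD _ _)).
by apply: lerD; apply: fgd => //; apply: iso_orthNr.
Qed.

Lemma approx_orth_constant_even d : 0 < d ->
  pair_defect_bounded f g d -> approx_orth_constant (f \- g).
Proof.
move=> d_gt0 fgd; exists (d + d); split=> [|x y xy]; first exact: addr_gt0.
rewrite constant_defect_even => [|z]; last by rewrite /= fN gN.
rewrite cauchy_defectB_pair.
apply: (le_trans (ler_normB _ _)).
by apply: lerD; apply: fgd => //; apply: iso_orthNr.
Qed.

End EvenMaps.

Lemma pair_defect_bounded_pexider f g (h k : X -> Y) eps : h 0 = 0 -> k 0 = 0 ->
  (forall x y, iso_orth x y -> `|f (x + y) + g (x - y) - h x - k y| <= eps) ->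
  pair_defect_bounded f g (eps + eps + eps).
Proof.
move=> h0 k0 fghk x y xy; rewrite (pair_defect_split f g h k).
have fghk_x := fghk x 0 (iso_orth0r x); rewrite addr0 subr0 k0 subr0 in fghk_x.
have fghk_y := fghk 0 y (iso_orth0l y); rewrite add0r sub0r h0 subr0 in fghk_y.
apply: (le_trans (ler_normB _ _)); apply: lerD => //.
by apply: (le_trans (ler_normB _ _)); apply: lerD => //; apply: fghk.
Qed.

Lemma lin_comb_CQK_pair_defect f g d : 0 < d ->
  pair_defect_bounded f g d -> lin_comb_CQK f.
Proof.
move=> d_gt0 fgd; have dd_gt0 : 0 < d + d by exact: addr_gt0.
have efgd := pair_defect_bounded_even_part fgd.
exists 2^-1, 4^-1, 4^-1, (odd_part f),
  (even_part f \+ even_part g), (even_part f \- even_part g); split.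
- exact: approx_orth_cauchy_odd_part d_gt0 fgd.
- apply: (approx_orth_quadratic_even (even_partN f) (even_partN g) dd_gt0 efgd).
- apply: (approx_orth_constant_even (even_partN f) (even_partN g) dd_gt0 efgd).
- by move=> z; apply: quarter_split.
Qed.

End ApproximateParts.

Theorem theorem3p1 (R : realType) (X : normedModType R)
  (Y : completeNormedModType R) (f g h k : X -> Y) (eps : R) :
  f 0 = 0 -> g 0 = 0 -> h 0 = 0 -> k 0 = 0 ->
  0 < eps ->
  (forall x y : X, iso_orth x y -> `|f (x + y) + g (x - y) - h x - k y| <= eps) ->
  lin_comb_CQK f /\ lin_comb_CQK g.
Proof.
move=> _ _ h0 k0 eps_gt0 fghk.
have fgd := pair_defect_bounded_pexider h0 k0 fghk.
have d_gt0 : 0 < eps + eps + eps by rewrite !addr_gt0.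
split; first exact: lin_comb_CQK_pair_defect d_gt0 fgd.
exact: lin_comb_CQK_pair_defect d_gt0 (pair_defect_boundedC fgd).
Qed.
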